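(* Let $v_1,\dots,v_m\in\mathbb{C}^d$ with $m$ even, $\sum_{i=1}^m v_iv_i^*=\mathbb{I}$, $\|v_i\|^2=\alpha$ for all $i$, and $\alpha\le\frac{1}{221d}$. Run Algorithm 1 (described in the context) and fix an iteration $0\le j<m/2$. Suppose that for every $0\le j'\le j$ we have $u_{j'}-\lambda_{\max}(A_{j'})\ge 1/3$ and $\kappa(u_{j'}\mathbb{I}-A_{j'})\le 3/2$. Write $A=A_j$, $\mathcal{B}=\mathcal{B}_j$, $\widehat u=u_{j+1}$. Then \[ \sum_{v\in\mathcal{B}}\log\Big(1-v^*(\widehat u\mathbb{I}-A)^{-1}v\Big)\ge\frac1\alpha\cdot\mathrm{tr}\Big[(\mathbb{I}-A)\cdot\log\big(\mathbb{I}-\alpha(\widehat u\mathbb{I}-A)^{-1}\big)\Big]. \]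
   Context: $\log$ of a positive definite matrix denotes the matrix logarithm. Algorithm 1: set $A_0=\mathbf{0}_{d\times d}$, $\mathcal{A}_0=\emptyset$, $\mathcal{B}_0=\{v_1,\dots,v_m\}$, $u_0=1/2$, $\delta_u=\alpha/d$. For $j=0,\dots,m/2-1$: set $u_{j+1}=u_j+\delta_u$; choose $v_j\in\mathcal{B}_j$ maximising $\det(u_{j+1}\mathbb{I}-A_j-vv^* )$ over $v\in\mathcal{B}_j$ (ties arbitrary); set $A_{j+1}=A_j+v_jv_j^*$, $\mathcal{A}_{j+1}=\mathcal{A}_j\cup\{v_j\}$, $\mathcal{B}_{j+1}=\mathcal{B}_j\setminus\{v_j\}$. $\kappa(B)=\lambda_{\max}(B)/\lambda_{\min}(B)$ for Hermitian positive definite $B$. *)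

From HB Require Import structures.
From mathcomp Require Import all_boot all_order all_algebra.
From mathcomp Require Import sesquilinear spectral.
From mathcomp Require Import complex.
From mathcomp Require Import reals exp.
Set Implicit Arguments.
Unset Strict Implicit.
Unset Printing Implicit Defensive.
Import Order.TTheory GRing.Theory Num.Theory.
Local Open Scope ring_scope.
Local Open Scope complex_scope.

Section Defs.
Variable R : realType.
Local Notation C := R[i].

Definition adj {m n} (M : 'M[C]_(m, n)) : 'M[C]_(n, m) := map_mx (@Num.conj C) (M ^T).

(* real parts of the eigenvalues of a (Hermitian) matrix, via the spectral
   decomposition B = P^-1 diag(sp) P of mathcomp's spectral.v *)
Definition eigs {n} (B : 'M[C]_n) : seq R :=
  [seq complex.Re (spectral_diag B 0 i) | i <- enum 'I_n].

Definition lambda_max {n} (B : 'M[C]_n) : R :=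
  foldr Num.max (head 0 (eigs B)) (eigs B).
Definition lambda_min {n} (B : 'M[C]_n) : R :=
  foldr Num.min (head 0 (eigs B)) (eigs B).

Definition kappa {n} (B : 'M[C]_n) : R := lambda_max B / lambda_min B.

(* matrix logarithm of a Hermitian positive definite matrix, by
   functional calculus on the spectral decomposition *)
Definition logm {n} (B : 'M[C]_n) : 'M[C]_n :=
  invmx (spectralmx B)
  *m diag_mx (\row_i (ln (complex.Re (spectral_diag B 0 i)))%:C)
  *m spectralmx B.

(* ---- Algorithm 1 ----
   A run is described by the sequence sel of chosen indices (v_{sel j} is the
   vector chosen at iteration j). *)
Definition u_ (alpha : R) (d j : nat) : R := 1/2 + j%:R * (alpha / d%:R).

Definition Aj {d m} (v : 'I_m -> 'cV[C]_d) (sel : nat -> 'I_m) (j : nat)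
  : 'M[C]_d := \sum_(k < j) (v (sel k) *m adj (v (sel k))).

Definition Bj {m} (sel : nat -> 'I_m) (j : nat) : {set 'I_m} :=
  [set i | [forall k : 'I_j, sel k != i]].

(* sel is a valid run of Algorithm 1 (ties broken arbitrarily) *)
Definition alg1_run {d m} (alpha : R) (v : 'I_m -> 'cV[C]_d)
  (sel : nat -> 'I_m) : Prop :=
  forall j, (j < m./2)%N ->
    sel j \in Bj sel j /\
    forall i, i \in Bj sel j ->
      \det ((u_ alpha d j.+1)%:C%:M - Aj v sel j - v i *m adj (v i))
      <= \det ((u_ alpha d j.+1)%:C%:M - Aj v sel j - v (sel j) *m adj (v (sel j))).

End Defs.

(* Since the unselected vectors satisfy sum_(v in B_j) v v^* = I - A_j, the trace
   on the right splits as a sum over v in B_j of v^* log(X) v, where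
   X = I - alpha (u I - A)^-1.  In an eigenbasis of X, v^* log(X) v is a weighted
   sum of the logarithms of the eigenvalues of X with weights |<e_k, v>|^2 of total
   mass |v|^2 = alpha, so concavity of ln bounds it by alpha ln(v^* X v / alpha),
   which is alpha ln(1 - v^* (u I - A)^-1 v).  The spectral gap
   u - lambda_max(A) >= 1/3 > alpha keeps X positive definite. *)

From mathcomp Require Import all_boot all_order all_algebra.
From mathcomp Require Import sesquilinear spectral.
From mathcomp Require Import complex.
From mathcomp Require Import reals exp.
From mathcomp Require Import lra.
Set Implicit Arguments.
Unset Strict Implicit.
Unset Printing Implicit Defensive.
Import Order.TTheory GRing.Theory Num.Theory.
Local Open Scope ring_scope.
Local Open Scope complex_scope.

Section Adjoint.
Context {R : realType}.
Local Notation C := R[i].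

Lemma adjM m n p (A : 'M[C]_(m, n)) (B : 'M[C]_(n, p)) :
  adj (A *m B) = adj B *m adj A.
Proof. by rewrite /adj trmx_mul map_mxM. Qed.

Lemma adjK m n (A : 'M[C]_(m, n)) : adj (adj A) = A.
Proof. exact: trmxCK. Qed.

Lemma adj_sum m n I (r : seq I) (P : pred I) (F : I -> 'M[C]_(m, n)) :
  adj (\sum_(i <- r | P i) F i) = \sum_(i <- r | P i) adj (F i).
Proof. by rewrite /adj raddf_sum /= raddf_sum. Qed.

Lemma adj_diag_real n (r : 'I_n -> R) :
  adj (diag_mx (\row_k (r k)%:C)) = diag_mx (\row_k (r k)%:C).
Proof.
rewrite /adj tr_diag_mx map_diag_mx; congr diag_mx.
by apply/rowP=> k; rewrite !mxE; exact: conjc_real.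
Qed.

Lemma unitary_adj_mul n (U : 'M[C]_n) : U \is unitarymx -> adj U *m U = 1%:M.
Proof. by move=> Uu; rewrite -[adj U]mul1mx mulmxKtV. Qed.

Lemma mxtrace_col_row n (u : 'cV[C]_n) (w : 'rV[C]_n) : \tr (u *m w) = (w *m u) 0 0.
Proof. by rewrite mxtrace_mulC /mxtrace big_ord1. Qed.

Lemma mxtrace_sum_outer_mul n I (r : seq I) (P : pred I) (v : I -> 'cV[C]_n)
    (L : 'M_n) :
  \tr ((\sum_(i <- r | P i) v i *m adj (v i)) *m L)
  = \sum_(i <- r | P i) (adj (v i) *m L *m v i) 0 0.
Proof.
rewrite mulmx_suml raddf_sum; apply: eq_bigr => i _.
by rewrite -mulmxA; exact: mxtrace_col_row.
Qed.

End Adjoint.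

Section HermitianCalculus.
Context {R : realType}.
Local Notation C := R[i].

Definition sqrnormc (z : C) : R := complex.Re z ^+ 2 + complex.Im z ^+ 2.

Lemma sqrnormc_ge0 z : 0 <= sqrnormc z.
Proof. by rewrite addr_ge0 ?sqr_ge0. Qed.

Lemma conjC_mul_sqrnormc (z : C) : Num.conj z * z = (sqrnormc z)%:C.
Proof. by rewrite mulrC -normCK /sqrnormc add_Re2_Im2. Qed.

Lemma adj_mul_cV n (u : 'cV[C]_n) :
  (adj u *m u) 0 0 = (\sum_k sqrnormc (u k 0))%:C.
Proof.
by rewrite mxE rmorph_sum; apply: eq_bigr => k _; rewrite !mxE conjC_mul_sqrnormc.
Qed.

Definition hermdiag n (U : 'M[C]_n) (r : 'I_n -> R) : 'M[C]_n :=
  adj U *m diag_mx (\row_k (r k)%:C) *m U.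

Lemma adj_hermdiag n (U : 'M[C]_n) r : adj (hermdiag U r) = hermdiag U r.
Proof. by rewrite !adjM adjK adj_diag_real mulmxA. Qed.

Lemma hermdiag_quad n (U : 'M[C]_n) r (u : 'cV[C]_n) :
  (adj u *m hermdiag U r *m u) 0 0 = (\sum_k r k * sqrnormc ((U *m u) k 0))%:C.
Proof.
rewrite /hermdiag !mulmxA -adjM -!mulmxA mulmxA; set y := U *m u.
rewrite mul_mx_diag mxE rmorph_sum; apply: eq_bigr => k _.
by rewrite !mxE mulrAC conjC_mul_sqrnormc rmorphM mulrC.
Qed.

Lemma hermdiagB n (U : 'M[C]_n) r s :
  hermdiag U r - hermdiag U s = hermdiag U (fun k => r k - s k).
Proof.
rewrite /hermdiag -mulmxBl -mulmxBr -raddfB; congr (_ *m diag_mx _ *m _).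
by apply/rowP => k; rewrite !mxE rmorphB.
Qed.

Lemma hermdiagZ n (U : 'M[C]_n) x r :
  x%:C *: hermdiag U r = hermdiag U (fun k => x * r k).
Proof.
rewrite /hermdiag scalemxAl scalemxAr; congr (_ *m _ *m _).
by apply/matrixP => i k; rewrite !mxE rmorphM mulrnAr.
Qed.

Section Unitary.
Variables (n : nat) (U : 'M[C]_n).
Hypothesis U_unitary : U \is unitarymx.

Lemma hermdiag_cst x : hermdiag U (fun _ => x) = x%:C%:M.
Proof.
rewrite /hermdiag (_ : diag_mx _ = x%:C%:M); last first.
  by rewrite -diag_const_mx; congr diag_mx; apply/rowP => k; rewrite !mxE.
by rewrite -mulmxA -scalar_mxC mulmxA unitary_adj_mul // mul1mx.
Qed.

Lemma hermdiagM r s : hermdiag U r *m hermdiag U s = hermdiag U (fun k => r k * s k).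
Proof.
rewrite /hermdiag !mulmxA -[_ *m U *m adj U]mulmxA (unitarymxP U_unitary) mulmx1.
rewrite -[_ *m diag_mx _ *m diag_mx _]mulmxA mulmx_diag; congr (_ *m diag_mx _ *m _).
by apply/rowP => k; rewrite !mxE rmorphM.
Qed.

Lemma invmx_hermdiag r : (forall k, r k != 0) ->
  invmx (hermdiag U r) = hermdiag U (fun k => (r k)^-1).
Proof.
move=> r_neq0.
have rV : hermdiag U r *m hermdiag U (fun k => (r k)^-1) = 1%:M.
  rewrite hermdiagM -(hermdiag_cst 1) /hermdiag; congr (_ *m diag_mx _ *m _).
  by apply/rowP => k; rewrite !mxE divff.
have [r_unit _] := mulmx1_unit rV.
by rewrite -[RHS](mulKmx r_unit) rV mulmx1.
Qed.

Lemma sqrnormc_unitary (u : 'cV[C]_n) :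
  \sum_k sqrnormc ((U *m u) k 0) = \sum_k sqrnormc (u k 0).
Proof.
apply: complexI; rewrite -!adj_mul_cV adjM -mulmxA [adj U *m _]mulmxA.
by rewrite unitary_adj_mul // mul1mx.
Qed.

End Unitary.
End HermitianCalculus.

Section Spectral.
Context {R : realType}.
Local Notation C := R[i].

Definition eigval n (H : 'M[C]_n) (k : 'I_n) : R := complex.Re (spectral_diag H 0 k).

Lemma eigval_le_lambda_max n (H : 'M[C]_n) k : eigval H k <= lambda_max H.
Proof.
have : eigval H k \in eigs H by apply/mapP; exists k; rewrite ?mem_enum.
rewrite /lambda_max; elim: (eigs H) (head _ _) => //= x s IH y.
by rewrite in_cons le_max => /orP[/eqP->|/IH->]; rewrite ?lexx ?orbT.
Qed.

Lemma hermitian_spectral n (H : 'M[C]_n) :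
  adj H = H -> H = hermdiag (spectralmx H) (eigval H).
Proof.
move=> H_herm.
have H_hsym : H \is hermsymmx by apply/is_hermitianmxP; rewrite expr0 scale1r.
have /orthomx_spectralP eH := hermitian_normalmx H_hsym.
have /mxOverP real_diag := hermitian_spectral_diag_real H_hsym.
rewrite {1}eH invmx_unitary ?spectral_unitarymx //; congr (_ *m diag_mx _ *m _).
by apply/rowP => k; rewrite mxE RRe_real ?real_diag.
Qed.

Lemma logm_spectral n (H : 'M[C]_n) :
  logm H = hermdiag (spectralmx H) (fun k => ln (eigval H k)).
Proof. by rewrite /logm invmx_unitary ?spectral_unitarymx. Qed.

Lemma row_quad m n (P : 'M[C]_(m, n)) (B : 'M[C]_n) k :
  (row k P *m B *m adj (row k P)) 0 0 = (P *m B *m adj P) k k.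
Proof.
have -> : adj (row k P) = col k (adj P) by apply/matrixP => i l; rewrite !mxE.
by rewrite -row_mul !mxE; apply: eq_bigr => l _; rewrite !mxE.
Qed.

Lemma eigval_quad n (H : 'M[C]_n) k (P := spectralmx H) : adj H = H ->
  (eigval H k)%:C = (row k P *m H *m adj (row k P)) 0 0.
Proof.
move=> H_herm; have Pu := spectral_unitarymx H.
rewrite row_quad {2}(hermitian_spectral H_herm) /hermdiag !mulmxA (unitarymxP Pu).
by rewrite mul1mx -mulmxA (unitarymxP Pu) mulmx1 !mxE eqxx mulr1n.
Qed.

Lemma eigval_hermdiag_ge n (U : 'M[C]_n) r b k : U \is unitarymx ->
  (forall l, b <= r l) -> b <= eigval (hermdiag U r) k.
Proof.
move=> Uu r_ge; set H := hermdiag U r; set P := spectralmx H.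
set u := adj (row k P).
have u_unit : \sum_l sqrnormc ((U *m u) l 0) = 1.
  apply: complexI; rewrite sqrnormc_unitary // -adj_mul_cV /u adjK.
  have := row_quad P 1%:M k; rewrite !mulmx1 => ->.
  by rewrite (unitarymxP (spectral_unitarymx H)) mxE eqxx.
have : (eigval H k)%:C = (\sum_l r l * sqrnormc ((U *m u) l 0))%:C.
  by rewrite eigval_quad ?adj_hermdiag // -/u -[row k P]adjK -/u hermdiag_quad.
move/complexI ->; rewrite -[b]mulr1 -u_unit mulr_sumr ler_sum // => l _.
by rewrite ler_wpM2r ?sqrnormc_ge0.
Qed.

End Spectral.

Lemma jensen_ln {R : realType} n (w mu : 'I_n -> R) :
  (forall k, 0 <= w k) -> (forall k, 0 < mu k) -> 0 < \sum_k w k ->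
  (\sum_k w k)^-1 * (\sum_k ln (mu k) * w k)
    <= ln ((\sum_k mu k * w k) / \sum_k w k).
Proof.
move=> w_ge0 mu_gt0 s_gt0; set s := \sum_k w k; set S := \sum_k mu k * w k.
have S_gt0 : 0 < S.
  have [k /andP[_ wk_gt0]] :=
    psumr_neq0P (fun k _ => w_ge0 k) (elimN eqP (lt0r_neq0 s_gt0)).
  apply: (lt_le_trans (mulr_gt0 (mu_gt0 k) wk_gt0)).
  rewrite /S (bigD1 k) //= lerDl sumr_ge0 // => l _.
  by rewrite mulr_ge0 // ltW.
set T := S / s; have T_gt0 : 0 < T by rewrite divr_gt0.
(* [ln] lies below its tangent at [T]. *)
have tangent k : ln (mu k) * w k <= (ln T + (mu k / T - 1)) * w k.
  rewrite ler_wpM2r // -lerBlDl -ln_div ?posrE //.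
  have := @le_ln1Dx _ (mu k / T - 1); rewrite [1 + _]addrC subrK; apply.
  by rewrite ltrBrDr addrC subrr divr_gt0.
rewrite ler_pdivrMl // (le_trans (ler_sum _ (fun k _ => tangent k))) //.
under eq_bigr do rewrite mulrDl mulrBl mul1r.
rewrite big_split /= sumrB -mulr_sumr -/s.
rewrite [X in _ + (X - _)](_ : _ = S / T); last first.
  by rewrite /S mulr_suml; apply: eq_bigr => k _; rewrite mulrAC.
by rewrite /T invf_div mulrCA divff ?gt_eqF // mulr1 -/s subrr addr0 mulrC.
Qed.

Section LogQuadratic.
Context {R : realType}.
Local Notation C := R[i].

Lemma quad_logm_le n (X : 'M[C]_n) (x : 'cV[C]_n) (a : R) :
  adj X = X -> (forall k, 0 < eigval X k) ->
  (adj x *m x) 0 0 = a%:C -> 0 < a ->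
  a^-1 * complex.Re ((adj x *m logm X *m x) 0 0)
    <= ln (complex.Re ((adj x *m X *m x) 0 0) / a).
Proof.
move=> X_herm X_pos xx a_gt0; set P := spectralmx X.
pose w k := sqrnormc ((P *m x) k 0).
have sw : \sum_k w k = a.
  by apply: complexI; rewrite sqrnormc_unitary ?spectral_unitarymx // -adj_mul_cV.
have qX : (adj x *m X *m x) 0 0 = (\sum_k eigval X k * w k)%:C.
  by rewrite {1}(hermitian_spectral X_herm) hermdiag_quad.
rewrite qX logm_spectral hermdiag_quad /=.
have := @jensen_ln _ _ w _ (fun k => sqrnormc_ge0 _) X_pos; rewrite sw; exact.
Qed.

Lemma one_sub_resolvent n (A : 'M[C]_n) (u alpha : R) :
  adj A = A -> (forall k, eigval A k != u) ->
  1%:M - alpha%:C *: invmx (u%:C%:M - A)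
  = hermdiag (spectralmx A) (fun k => 1 - alpha / (u - eigval A k)).
Proof.
move=> A_herm eig_neq; have Qu := spectral_unitarymx A.
rewrite {1}(hermitian_spectral A_herm) -(hermdiag_cst Qu u) hermdiagB.
rewrite invmx_hermdiag // => [|k]; last by rewrite subr_eq0 eq_sym.
by rewrite hermdiagZ -(hermdiag_cst Qu 1) hermdiagB.
Qed.

Lemma quad_logm_resolvent_le n (A : 'M[C]_n) (u alpha g : R) (x : 'cV[C]_n) :
  adj A = A -> 0 < alpha -> alpha < g -> (forall k, g <= u - eigval A k) ->
  (adj x *m x) 0 0 = alpha%:C ->
  alpha^-1 * complex.Re
    ((adj x *m logm (1%:M - alpha%:C *: invmx (u%:C%:M - A)) *m x) 0 0)
  <= ln (1 - complex.Re ((adj x *m invmx (u%:C%:M - A) *m x) 0 0)).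
Proof.
move=> A_herm alpha_gt0 alpha_lt_g gap xx.
have g_gt0 : 0 < g := lt_trans alpha_gt0 alpha_lt_g.
have eig_neq k : eigval A k != u.
  by apply/eqP => eig_u; have := gap k; rewrite eig_u subrr; lra.
set N := invmx _; set X := 1%:M - _.
have eX : X = hermdiag (spectralmx A) _ := one_sub_resolvent alpha A_herm eig_neq.
have X_herm : adj X = X by rewrite eX adj_hermdiag.
have X_pos k : 0 < eigval X k.
  apply: (@lt_le_trans _ _ (1 - alpha / g)).
    by rewrite subr_gt0 ltr_pdivrMr // mul1r.
  rewrite eX; apply: eigval_hermdiag_ge (spectral_unitarymx A) _ => l.
  rewrite lerD2l lerN2 ler_wpM2l ?(ltW alpha_gt0) //.
  by rewrite lef_pV2 ?posrE ?gap // (lt_le_trans g_gt0 (gap l)).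
have := quad_logm_le X_herm X_pos xx alpha_gt0.
suff -> : complex.Re ((adj x *m X *m x) 0 0) / alpha
          = 1 - complex.Re ((adj x *m N *m x) 0 0) by [].
rewrite /X mulmxBr mulmxBl mulmx1 -scalemxAr -scalemxAl.
rewrite (_ : (adj x *m x - alpha%:C *: (adj x *m N *m x)) 0 0
            = (adj x *m x) 0 0 - alpha%:C * (adj x *m N *m x) 0 0);
  last by rewrite !mxE.
rewrite xx; move: (_ 0 0) => [a b] /=.
by rewrite mul0r subr0 -{1}[alpha]mulr1 -mulrBr mulrC mulKf ?gt_eqF.
Qed.

End LogQuadratic.

Section Algorithm1.
Context {R : realType}.
Local Notation C := R[i].
Variables (d m : nat) (v : 'I_m -> 'cV[C]_d) (alpha : R) (sel : nat -> 'I_m).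
Hypothesis frame : \sum_(i < m) v i *m adj (v i) = 1%:M.

Lemma dim_eq_size_mul_norm : (forall i, (adj (v i) *m v i) 0 0 = alpha%:C) ->
  d%:R = m%:R * alpha.
Proof.
move=> v_norm; apply: complexI; rewrite rmorphM /= !rmorph_nat mulr_natl.
have := congr1 mxtrace frame; rewrite mxtrace1 raddf_sum /= => <-.
under eq_bigr do rewrite mxtrace_col_row v_norm.
by rewrite sumr_const card_ord.
Qed.

Lemma adj_Aj j : adj (Aj v sel j) = Aj v sel j.
Proof. by rewrite adj_sum; apply: eq_bigr => k _; rewrite adjM adjK. Qed.

Hypothesis run : alg1_run alpha v sel.

Lemma sel_inj j : (j <= m./2)%N -> injective (fun k : 'I_j => sel k).
Proof.
move=> j_le; have sel_neq k1 k2 : (k1 < k2 < j)%N -> sel k1 != sel k2.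
  case/andP=> lt12 lt2j; have [sel_B _] := run (leq_trans lt2j j_le).
  by move: sel_B; rewrite inE => /forallP /(_ (Ordinal lt12)).
move=> k1 k2 /= eq_sel; apply/val_inj/eqP; apply: contraT; rewrite neq_ltn.
by case/orP=> lt; [have := sel_neq k1 k2 | have := sel_neq k2 k1];
  rewrite lt ltn_ord eq_sel eqxx => /(_ isT).
Qed.

Lemma one_sub_Aj j : (j <= m./2)%N ->
  1%:M - Aj v sel j = \sum_(x in Bj sel j) v x *m adj (v x).
Proof.
move=> j_le; rewrite -frame (bigID (mem (Bj sel j))) /=.
suff -> : \sum_(i < m | i \notin Bj sel j) v i *m adj (v i) = Aj v sel j.
  by rewrite addrK.
rewrite (eq_bigl (mem [set sel k | k : 'I_j])); last first.
  move=> i; rewrite !inE negb_forall; apply/existsP/imsetP.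
    by case=> k /negPn /eqP <-; exists k.
  by case=> k _ ->; exists k; rewrite eqxx.
rewrite big_imset /=; last by apply: in2W; exact: sel_inj.
by apply: eq_bigl => k; rewrite inE.
Qed.

End Algorithm1.

Theorem lemma3p3 (R : realType) (d m : nat) (v : 'I_m -> 'cV[R[i]]_d)
  (alpha : R) (sel : nat -> 'I_m) (j : nat) :
  (0 < d)%N ->
  ~~ odd m ->
  \sum_(i < m) (v i *m adj (v i)) = 1%:M ->
  (forall i, (adj (v i) *m v i) 0 0 = alpha%:C) ->
  alpha <= 1 / (221 * d%:R) ->
  alg1_run alpha v sel ->
  (j < m./2)%N ->
  (forall j', (j' <= j)%N ->
     u_ alpha d j' - lambda_max (Aj v sel j') >= 1/3 /\
     kappa ((u_ alpha d j')%:C%:M - Aj v sel j') <= 3/2) ->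
  let A := Aj v sel j in
  let uh := u_ alpha d j.+1 in
  \sum_(x in Bj sel j)
     ln (1 - complex.Re ((adj (v x) *m invmx (uh%:C%:M - A) *m v x) 0 0))
  >= alpha^-1 *
     complex.Re (\tr ((1%:M - A) *m logm (1%:M - alpha%:C *: invmx (uh%:C%:M - A)))).
Proof.
move=> d_gt0 _ frame v_norm alpha_le run j_lt gaps /=.
set A := Aj v sel j; set uh := u_ alpha d j.+1.
have d_ge1 : 1 <= d%:R :> R by rewrite ler1n.
have alpha_gt0 : 0 < alpha.
  have := dim_eq_size_mul_norm frame v_norm; have : 0 <= m%:R :> R by [].
  nra.
have alpha_lt : alpha < 1/3.
  by move: alpha_le; rewrite ler_pdivlMr ?mulr_gt0 ?ltr0n //; nra.
have gap k : 1/3 <= uh - eigval A k.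
  have := eigval_le_lambda_max A k; have := (gaps j (leqnn j)).1.
  have : 0 <= alpha / d%:R by rewrite divr_ge0 // ltW.
  rewrite /uh /u_ -addn1 natrD; lra.
rewrite /A (one_sub_Aj frame run (ltnW j_lt)) mxtrace_sum_outer_mul.
rewrite raddf_sum mulr_sumr; apply: ler_sum => x _.
exact: quad_logm_resolvent_le (adj_Aj _ _ _) alpha_gt0 alpha_lt gap _.
Qed.
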